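(* An undirected graph $G=(V,E)$ (finite or infinite) has at most one multiplex $M$ with $\widetilde M=V$.
   Context: A graph $G=(V,E)$ has vertex set $V$ and edge set $E\subseteq V^2$; it is undirected if $E$ is irreflexive and symmetric. Implication classes: on $E$ define $(a,b)\Gamma(a',b')$ iff either $a=a'$ and $(b,b')\notin E$, or $b=b'$ and $(a,a')\notin E$; the classes of the transitive closure $\Gamma^*$ are the implication classes. For an implication class $A$, $A^{-1}=\{(b,a):(a,b)\in A\}$ and the color class is $\widehat A=A\cup A^{-1}$. A simplex of rank $r\ge1$ is a complete sub-graph $S=(V_S,E_S)$ of $G$ on $r+1$ vertices whose distinct undirected edges lie in distinct color classes. A multiplex is a set of edges of the form $M(S)=\bigcup\{\widehat A:\widehat A\text{ a color class},\ \widehat A\cap E_S\neq\emptyset\}$ for a simplex $S$; $\widetilde M$ is the set of vertices spanned by $M$. *)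

From Stdlib Require Import List Relations.
Import ListNotations.

Section Graphs.
Variable V : Type.
Variable E : V -> V -> Prop.

Definition undirected : Prop :=
  (forall a, ~ E a a) /\ (forall a b, E a b -> E b a).

Definition Gamma (e f : V * V) : Prop :=
  E (fst e) (snd e) /\ E (fst f) (snd f) /\
  ((fst e = fst f /\ ~ E (snd e) (snd f)) \/
   (snd e = snd f /\ ~ E (fst e) (fst f))).

(* Gamma* : transitive closure; its classes are the implication classes. *)
Definition Gamma_star : V * V -> V * V -> Prop := clos_trans (V * V) Gamma.

(* color_class a b x y : (x,y) lies in the color class A ∪ A^{-1},
   where A is the implication class of the edge (a,b). *)
Definition color_class (a b x y : V) : Prop :=
  Gamma_star (a, b) (x, y) \/ Gamma_star (a, b) (y, x).

(* A simplex of rank r >= 1, given by its list of r+1 distinct vertices. *)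
Definition simplex (s : list V) : Prop :=
  NoDup s /\ 2 <= length s /\
  (forall x y, In x s -> In y s -> x <> y -> E x y) /\
  (forall x y u v, In x s -> In y s -> In u s -> In v s ->
     x <> y -> u <> v -> color_class x y u v ->
     (x = u /\ y = v) \/ (x = v /\ y = u)).

Definition multiplex_of (s : list V) (x y : V) : Prop :=
  exists u v, In u s /\ In v s /\ u <> v /\ color_class u v x y.

Definition is_multiplex (M : V -> V -> Prop) : Prop :=
  exists s, simplex s /\ forall x y, M x y <-> multiplex_of s x y.

Definition spanned (M : V -> V -> Prop) (z : V) : Prop :=
  exists w, M z w \/ M w z.

End Graphs.

From Stdlib Require Import List Relations Classical Lia.

(* If the simplex S has at least three vertices, every vertex p has a type: the unique vertex k
   of S with (m, p) Gamma* (m, k) for all other vertices m of S.  Vertices of different types are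
   adjacent, and by the triangle lemma M(S) consists exactly of the edges joining different types.
   Each type class is connected in the complement of G, so the type classes are the co-components
   of G and M(S) depends on G alone.  If S is a single edge, M(S) is one color class spanning V;
   the triangle lemma shows that any other spanning simplex has an edge in that class and no
   further vertex, so its multiplex is the same class. *)

Set Implicit Arguments.
Unset Strict Implicit.

Section Graph.

Variables (V : Type) (E : V -> V -> Prop).
Hypothesis HU : undirected V E.

Let E_irrefl : forall a, ~ E a a := proj1 HU.
Let E_sym : forall a b, E a b -> E b a := proj2 HU.

Local Notation Gs := (Gamma_star V E).
Local Notation color := (color_class V E).

Lemma Gamma_star_edges e f : Gs e f -> E (fst e) (snd e) /\ E (fst f) (snd f).
Proof. induction 1 as [e f (He & Hf & _) | e g f _ [He _] _ [_ Hf]]; auto. Qed.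

Lemma Gamma_star_edge_l a b f : Gs (a, b) f -> E a b.
Proof. intros H; exact (proj1 (Gamma_star_edges H)). Qed.

Lemma Gamma_star_edge_r e c d : Gs e (c, d) -> E c d.
Proof. intros H; exact (proj2 (Gamma_star_edges H)). Qed.

Lemma Gamma_star_refl a b : E a b -> Gs (a, b) (a, b).
Proof. intros Hab; apply t_step; repeat split; auto. Qed.

Lemma Gamma_star_trans e f g : Gs e f -> Gs f g -> Gs e g.
Proof. apply t_trans. Qed.

Lemma Gamma_star_sym e f : Gs e f -> Gs f e.
Proof.
  induction 1 as [e f (He & Hf & [[Heq Hn] | [Heq Hn]]) | e g f _ IH1 _ IH2].
  - apply t_step; repeat split; auto; left; split; auto.
  - apply t_step; repeat split; auto; right; split; auto.
  - exact (Gamma_star_trans IH2 IH1).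
Qed.

Lemma Gamma_star_swap a b c d : Gs (a, b) (c, d) -> Gs (b, a) (d, c).
Proof.
  assert (Hswap : forall e f, Gs e f -> Gs (snd e, fst e) (snd f, fst f)).
  { induction 1 as [e f (He & Hf & Hsh) | e g f _ IH1 _ IH2].
    - apply t_step; repeat split; auto; simpl; tauto.
    - exact (Gamma_star_trans IH1 IH2). }
  exact (Hswap (a, b) (c, d)).
Qed.

Lemma Gamma_star_fst x y z : E x y -> E x z -> ~ E y z -> Gs (x, y) (x, z).
Proof. intros; apply t_step; repeat split; auto. Qed.

Lemma Gamma_star_snd x y z : E x z -> E y z -> ~ E x y -> Gs (x, z) (y, z).
Proof. intros; apply t_step; repeat split; auto. Qed.

Lemma adj_of_not_Gamma_star_fst x y z : E x y -> E x z -> ~ Gs (x, y) (x, z) -> E y z.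
Proof. intros Hxy Hxz N; apply NNPP; intros Hyz; exact (N (Gamma_star_fst Hxy Hxz Hyz)). Qed.

Lemma Gamma_star_invariant (P : V * V -> Prop) e f :
  (forall e f, P e -> Gamma V E e f -> P f) -> P e -> Gs e f -> P f.
Proof. intros Hstep Pe H; revert Pe; induction H; eauto. Qed.

Lemma color_class_edge a b x y : color a b x y -> E x y.
Proof. intros [G | G]; [exact (Gamma_star_edge_r G) | exact (E_sym (Gamma_star_edge_r G))]. Qed.

Lemma color_class_swap a b x y : color a b x y -> color b a x y.
Proof. intros [G | G]; apply Gamma_star_swap in G; [right | left]; exact G. Qed.

Lemma color_class_sym a b u v : color a b u v -> color u v a b.
Proof.
  intros [G | G]; [left | right]; apply Gamma_star_sym; auto.
  exact (Gamma_star_swap G).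
Qed.

Lemma color_class_trans a b u v x y : color a b u v -> color u v x y -> color a b x y.
Proof.
  intros [G1 | G1] [G2 | G2].
  - left; exact (Gamma_star_trans G1 G2).
  - right; exact (Gamma_star_trans G1 G2).
  - right; exact (Gamma_star_trans G1 (Gamma_star_swap G2)).
  - left; exact (Gamma_star_trans G1 (Gamma_star_swap G2)).
Qed.

Lemma color_class_iff a b u v : color a b u v -> forall x y, color a b x y <-> color u v x y.
Proof.
  intros C x y; split; intros C'.
  - exact (color_class_trans (color_class_sym C) C').
  - exact (color_class_trans C C').
Qed.

Lemma multiplex_ofE s x y :
  multiplex_of V E s x y <-> exists u v, In u s /\ In v s /\ u <> v /\ Gs (u, v) (x, y).
Proof.
  split.
  - intros (u & v & Hu & Hv & Huv & [G | G]).
    + exists u, v; auto.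
    + exists v, u; repeat split; auto. exact (Gamma_star_swap G).
  - intros (u & v & Hu & Hv & Huv & G). exists u, v; repeat split; auto. left; exact G.
Qed.

Lemma triangle_lemma a b c :
  E a b -> E a c -> E b c -> ~ Gs (b, c) (b, a) -> ~ Gs (b, c) (a, c) ->
  forall x y, Gs (b, c) (x, y) -> Gs (a, x) (a, b) /\ Gs (a, y) (a, c).
Proof.
  intros Hab Hac Hbc Nba Nac x y G.
  set (P := fun e : V * V => Gs (b, c) e /\ Gs (a, fst e) (a, b) /\ Gs (a, snd e) (a, c)).
  enough (HP : P (x, y)) by (destruct HP as (_ & HP); exact HP).
  apply Gamma_star_invariant with (P := P) (e := (b, c));
    [| repeat split; auto using Gamma_star_refl | exact G].
  intros [x1 x2] [y1 y2] (Hbx & Hx1 & Hx2) Hstep.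
  pose proof (Gamma_star_trans Hbx (t_step _ _ _ _ Hstep)) as Hby.
  (* The new endpoint is adjacent to a, or the chain would reach (b, a) resp. (a, c). *)
  destruct Hstep as (Hx & Hy & [[Heq Hn] | [Heq Hn]]); simpl in *; subst; split; auto.
  - assert (Hay2 : E a y2).
    { apply NNPP; intros Hn'; apply Nba.
      apply (Gamma_star_trans Hby), (Gamma_star_trans (f := (y1, a))).
      - apply Gamma_star_fst; auto. apply E_sym, (Gamma_star_edge_l Hx1).
      - exact (Gamma_star_swap Hx1). }
    split; auto.
    apply (Gamma_star_trans (f := (a, x2))); auto.
    apply Gamma_star_fst; auto. exact (Gamma_star_edge_l Hx2).
  - assert (Hay1 : E a y1).
    { apply NNPP; intros Hn'; apply Nac.
      apply (Gamma_star_trans Hby), (Gamma_star_trans (f := (a, y2))); auto.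
      apply Gamma_star_snd; auto. exact (Gamma_star_edge_l Hx2). }
    split; auto.
    apply (Gamma_star_trans (f := (a, x1))); auto.
    apply Gamma_star_fst; auto. exact (Gamma_star_edge_l Hx1).
Qed.

Lemma triangle_class_avoids_apex a b c :
  E a b -> E a c -> E b c -> ~ Gs (b, c) (b, a) -> ~ Gs (b, c) (a, c) ->
  forall x y, Gs (b, c) (x, y) -> x <> a /\ y <> a.
Proof.
  intros Hab Hac Hbc Nba Nac x y G.
  destruct (triangle_lemma Hab Hac Hbc Nba Nac G) as [Gx Gy].
  split; intros ->; eapply E_irrefl; [exact (Gamma_star_edge_l Gx) | exact (Gamma_star_edge_l Gy)].
Qed.

Definition covers (s : list V) : Prop := forall z, exists w, multiplex_of V E s z w.

Definition has_third_vertex (s : list V) : Prop :=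
  forall a b, In a s -> In b s -> exists m, In m s /\ m <> a /\ m <> b.

Definition co_connected : V -> V -> Prop := clos_refl_sym_trans V (fun a b => ~ E a b).

Section Simplex.

Variable s : list V.
Hypothesis Hs : simplex V E s.

Lemma simplex_adj x y : In x s -> In y s -> x <> y -> E x y.
Proof. destruct Hs as (_ & _ & Hadj & _); auto. Qed.

Lemma simplex_Gamma_star i j k l :
  In i s -> In j s -> In k s -> In l s -> i <> j -> k <> l ->
  Gs (i, j) (k, l) -> i = k /\ j = l \/ i = l /\ j = k.
Proof. destruct Hs as (_ & _ & _ & Hcol); intros; apply Hcol; auto; left; auto. Qed.

Lemma simplex_Gamma_star_fst m k l :
  In m s -> In k s -> In l s -> m <> k -> m <> l -> Gs (m, k) (m, l) -> k = l.
Proof.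
  intros Hm Hk Hl Hmk Hml G.
  destruct (simplex_Gamma_star Hm Hk Hm Hl Hmk Hml G) as [[_ ->] | [_ ->]]; congruence.
Qed.

Lemma simplex_triangle i j m x y :
  In i s -> In j s -> In m s -> i <> j -> m <> i -> m <> j ->
  Gs (i, j) (x, y) -> Gs (m, x) (m, i) /\ Gs (m, y) (m, j).
Proof.
  intros Hi Hj Hm Hij Hmi Hmj.
  apply triangle_lemma; auto using simplex_adj.
  - intros G; destruct (simplex_Gamma_star Hi Hj Hi Hm Hij (not_eq_sym Hmi) G); intuition congruence.
  - intros G; destruct (simplex_Gamma_star Hi Hj Hm Hj Hij Hmj G); intuition congruence.
Qed.

Lemma simplex_class_avoids i j m x y :
  In i s -> In j s -> In m s -> i <> j -> m <> i -> m <> j ->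
  Gs (i, j) (x, y) -> x <> m /\ y <> m.
Proof.
  intros Hi Hj Hm Hij Hmi Hmj G.
  destruct (simplex_triangle Hi Hj Hm Hij Hmi Hmj G) as [Gx Gy].
  split; intros ->; eapply E_irrefl; [exact (Gamma_star_edge_l Gx) | exact (Gamma_star_edge_l Gy)].
Qed.

Definition has_type (p k : V) : Prop :=
  In k s /\ forall m, In m s -> m <> k -> Gs (m, p) (m, k).

Lemma has_type_refl k : In k s -> has_type k k.
Proof. intros Hk; split; auto. intros m Hm Hmk; apply Gamma_star_refl, simplex_adj; auto. Qed.

Section ThirdVertex.

Hypothesis Hthird : has_third_vertex s.

Lemma has_type_unique p k l : has_type p k -> has_type p l -> k = l.
Proof.
  intros [Hk Hpk] [Hl Hpl].
  destruct (Hthird Hk Hl) as (m & Hm & Hmk & Hml).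
  apply (simplex_Gamma_star_fst Hm Hk Hl Hmk Hml).
  exact (Gamma_star_trans (Gamma_star_sym (Hpk m Hm Hmk)) (Hpl m Hm Hml)).
Qed.

Lemma has_type_of_Gamma_star i j p q :
  In i s -> In j s -> i <> j -> Gs (i, j) (p, q) -> has_type p i.
Proof.
  intros Hi Hj Hij G; split; auto. intros m Hm Hmi.
  destruct (classic (m = j)) as [-> | Hmj].
  - destruct (Hthird Hi Hj) as (n & Hn & Hni & Hnj).
    destruct (simplex_triangle Hi Hj Hn Hij Hni Hnj G) as [Gn _].
    refine (proj2 (simplex_triangle Hn Hi Hj _ _ _ (Gamma_star_sym Gn))); congruence.
  - exact (proj1 (simplex_triangle Hi Hj Hm Hij Hmi Hmj G)).
Qed.

Lemma adj_of_has_type_neq p q k l : has_type p k -> has_type q l -> k <> l -> E p q.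
Proof.
  intros [Hk Hpk] [Hl Hql] Hkl.
  destruct (Hthird Hk Hl) as (m & Hm & Hmk & Hml).
  pose proof (Hpk m Hm Hmk) as Gp; pose proof (Hql m Hm Hml) as Gq.
  apply (adj_of_not_Gamma_star_fst (Gamma_star_edge_l Gp) (Gamma_star_edge_l Gq)).
  intros G; apply Hkl, (simplex_Gamma_star_fst Hm Hk Hl Hmk Hml).
  exact (Gamma_star_trans (Gamma_star_sym Gp) (Gamma_star_trans G Gq)).
Qed.

Lemma multiplex_of_adj_has_type_neq x y k l :
  E x y -> has_type x k -> has_type y l -> k <> l -> multiplex_of V E s x y.
Proof.
  intros Hxy [Hk Hxk] [Hl Hyl] Hkl.
  destruct (Hthird Hk Hl) as (m & Hm & Hmk & Hml).
  pose proof (Hxk m Hm Hmk) as Gx; pose proof (Hyl m Hm Hml) as Gy.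
  apply multiplex_ofE.
  destruct (classic (Gs (m, y) (x, y))) as [Gmx | Nmx].
  - exists m, l; repeat split; auto. exact (Gamma_star_trans (Gamma_star_sym Gy) Gmx).
  - assert (Nmm : ~ Gs (m, y) (m, x)).
    { intros G; apply Hkl, eq_sym, (simplex_Gamma_star_fst Hm Hl Hk Hml Hmk).
      exact (Gamma_star_trans (Gamma_star_sym Gy) (Gamma_star_trans G Gx)). }
    (* The triangle lemma at apex x carries (m, l) to (x, l) in the class of (x, y). *)
    destruct (triangle_lemma (E_sym (Gamma_star_edge_l Gx)) Hxy (Gamma_star_edge_l Gy)
                Nmm Nmx Gy) as [_ Gxl].
    exists k, l; repeat split; auto.
    apply Gamma_star_swap, (Gamma_star_trans (Gamma_star_sym (Hxk l Hl (not_eq_sym Hkl)))).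
    exact (Gamma_star_swap Gxl).
Qed.

Section Covering.

Hypothesis Hcov : covers s.

Lemma has_type_exists z : exists k, has_type z k.
Proof.
  destruct (Hcov z) as [w Hzw]; apply multiplex_ofE in Hzw.
  destruct Hzw as (u & v & Hu & Hv & Huv & G).
  exists u; exact (has_type_of_Gamma_star Hu Hv Huv G).
Qed.

Lemma same_type_of_co_connected x y : co_connected x y -> exists k, has_type x k /\ has_type y k.
Proof.
  induction 1 as [x y Hxy | x | x y _ [k [Hx Hy]] | x y z _ [k [Hx Hy]] _ [l [Hy' Hz]]].
  - destruct (has_type_exists x) as [k Hx], (has_type_exists y) as [l Hy].
    exists k; split; auto.
    destruct (classic (k = l)) as [-> | Hkl]; auto.
    contradiction (adj_of_has_type_neq Hx Hy Hkl).
  - destruct (has_type_exists x) as [k Hx]; exists k; auto.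
  - exists k; auto.
  - exists k; split; auto. rewrite (has_type_unique Hy Hy'); auto.
Qed.

(* Following a chain of forcings from (m, k) to (m, p), the second vertex only ever moves
   along non-edges, while the first never acquires type k. *)
Lemma co_connected_of_has_type p k : has_type p k -> co_connected k p.
Proof.
  intros [Hk Hpk].
  destruct (Hthird Hk Hk) as (m & Hm & Hmk & _).
  set (P := fun e : V * V => ~ has_type (fst e) k /\ co_connected k (snd e)).
  enough (HP : P (m, p)) by exact (proj2 HP).
  apply Gamma_star_invariant with (P := P) (e := (m, k));
    [| split | exact (Gamma_star_sym (Hpk m Hm Hmk))].
  - intros [a b] [a' b'] [Ha Hkb] (_ & _ & [[Heq Hn] | [Heq Hn]]); simpl in *; subst; split; auto.
    + exact (rst_trans _ _ _ _ _ Hkb (rst_step _ _ _ _ Hn)).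
    + intros Ha'. destruct (has_type_exists a) as [t Hat].
      assert (Htk : t <> k) by (intros ->; contradiction).
      exact (Hn (adj_of_has_type_neq Hat Ha' Htk)).
  - intros Hmk'; exact (Hmk (has_type_unique (has_type_refl Hm) Hmk')).
  - apply rst_refl.
Qed.

Lemma multiplex_of_co_connected x y : multiplex_of V E s x y <-> E x y /\ ~ co_connected x y.
Proof.
  split.
  - intros Hxy; apply multiplex_ofE in Hxy; destruct Hxy as (u & v & Hu & Hv & Huv & G).
    split; [exact (Gamma_star_edge_r G) |].
    intros Hc; destruct (same_type_of_co_connected Hc) as (k & Hx & Hy).
    apply Huv.
    rewrite (has_type_unique (has_type_of_Gamma_star Hu Hv Huv G) Hx).
    apply Gamma_star_swap in G.
    exact (has_type_unique Hy (has_type_of_Gamma_star Hv Hu (not_eq_sym Huv) G)).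
  - intros [Hxy Hc].
    destruct (has_type_exists x) as [k Hx], (has_type_exists y) as [l Hy].
    apply (multiplex_of_adj_has_type_neq Hxy Hx Hy).
    intros <-; apply Hc.
    apply rst_trans with k; [apply rst_sym |]; apply co_connected_of_has_type; auto.
Qed.

End Covering.

End ThirdVertex.

End Simplex.

Lemma simplex_two_vertices s : simplex V E s -> exists u v, In u s /\ In v s /\ u <> v.
Proof.
  intros (Hnd & Hlen & _).
  destruct s as [| u [| v t]]; simpl in Hlen; try lia.
  exists u, v; repeat split; simpl; auto.
  intros ->; apply NoDup_cons_iff in Hnd; apply (proj1 Hnd); left; auto.
Qed.

Lemma simplex_third_or_pair s : simplex V E s ->
  has_third_vertex s \/
  exists u v, In u s /\ In v s /\ u <> v /\ forall m, In m s -> m = u \/ m = v.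
Proof.
  intros Hs; destruct (simplex_two_vertices Hs) as (u & v & Hu & Hv & Huv).
  destruct (classic (exists m, In m s /\ m <> u /\ m <> v)) as [(m & Hm & Hmu & Hmv) | Hno].
  - left; intros a b _ _.
    destruct (classic (u = a \/ u = b)) as [Hu_ab | Hu_ab]; [| exists u; tauto].
    destruct (classic (v = a \/ v = b)) as [Hv_ab | Hv_ab]; [| exists v; tauto].
    exists m; split; [exact Hm |]; split; intros ->; intuition congruence.
  - right; exists u, v; repeat split; auto.
    intros m Hm; apply NNPP; intros Hmuv; apply Hno; exists m; tauto.
Qed.

Lemma multiplex_of_pair s u v :
  In u s -> In v s -> u <> v -> (forall m, In m s -> m = u \/ m = v) ->
  forall x y, multiplex_of V E s x y <-> color u v x y.
Proof.
  intros Hu Hv Huv Hall x y; split.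
  - intros (a & b & Ha & Hb & Hab & C).
    destruct (Hall a Ha) as [-> | ->], (Hall b Hb) as [-> | ->];
      try congruence; auto using color_class_swap.
  - intros C; exists u, v; auto.
Qed.

Section SpanningClass.

Variables a b : V.
Hypothesis Hspan : forall z, exists w, color a b z w.

Lemma spanning_class_fan x y z : E x y -> color a b x z -> ~ Gs (x, y) (x, z) -> color a b y z.
Proof.
  intros Hxy Cxz Nxy.
  pose proof (color_class_edge Cxz) as Hxz.
  pose proof (adj_of_not_Gamma_star_fst Hxy Hxz Nxy) as Hyz.
  apply NNPP; intros Nyz.
  assert (Nxz : ~ Gs (x, z) (y, z)) by (intros G; apply Nyz, (color_class_trans Cxz); left; exact G).
  assert (Nzy : ~ Gs (x, z) (x, y)) by (intros G; exact (Nxy (Gamma_star_sym G))).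
  pose proof (triangle_class_avoids_apex (E_sym Hxy) Hyz Hxz Nzy Nxz) as Havoid.
  destruct (Hspan y) as [w Cyw].
  destruct (color_class_trans (color_class_sym Cxz) Cyw) as [G | G].
  - exact (proj1 (Havoid _ _ G) eq_refl).
  - exact (proj2 (Havoid _ _ G) eq_refl).
Qed.

Lemma simplex_meets_spanning_class s : simplex V E s -> covers s ->
  exists u v, In u s /\ In v s /\ u <> v /\ color a b u v.
Proof.
  intros Hs Hcov; apply NNPP; intros Hnone.
  assert (Hfree : forall u v p q, In u s -> In v s -> u <> v -> color a b p q -> ~ Gs (u, v) (p, q)).
  { intros u v p q Hu Hv Huv Cpq G; apply Hnone; exists u, v; repeat split; auto.
    apply (color_class_trans Cpq), color_class_sym; left; exact G. }
  destruct (simplex_two_vertices Hs) as (s0 & s1 & H0 & H1 & H01).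
  destruct (Hspan s0) as [z C0].
  pose proof (spanning_class_fan (simplex_adj Hs H0 H1 H01) C0 (Hfree s0 s1 s0 z H0 H1 H01 C0))
    as C1.
  (* With (s0, z) and (s1, z) in the class, the class of (s0, s1) stays away from z, and the
     class of any other edge of s would force (s0, z) or (s1, z) into it: z is not covered. *)
  assert (Havoid : forall p q, Gs (s0, s1) (p, q) -> p <> z /\ q <> z).
  { apply triangle_class_avoids_apex.
    - exact (E_sym (color_class_edge C0)).
    - exact (E_sym (color_class_edge C1)).
    - exact (simplex_adj Hs H0 H1 H01).
    - exact (Hfree s0 s1 s0 z H0 H1 H01 C0).
    - intros G; exact (Hfree s1 s0 s1 z H1 H0 (not_eq_sym H01) C1 (Gamma_star_swap G)). }
  assert (Hout : forall m u v w, In m s -> color a b m z -> In u s -> In v s -> u <> v ->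
                   m <> u -> m <> v -> ~ Gs (u, v) (z, w)).
  { intros m u v w Hm Cm Hu Hv Huv Hmu Hmv G.
    destruct (simplex_triangle Hs Hu Hv Hm Huv Hmu Hmv G) as [Gm _].
    exact (Hfree m u m z Hm Hu Hmu Cm (Gamma_star_sym Gm)). }
  destruct (Hcov z) as [w Hzw]; apply multiplex_ofE in Hzw.
  destruct Hzw as (u & v & Hu & Hv & Huv & G).
  destruct (classic (s0 = u \/ s0 = v)) as [H0uv | H0uv];
    [| apply (Hout s0 u v w); tauto].
  destruct (classic (s1 = u \/ s1 = v)) as [H1uv | H1uv];
    [| apply (Hout s1 u v w); tauto].
  destruct H0uv as [<- | <-], H1uv as [<- | <-]; try congruence.
  - exact (proj1 (Havoid _ _ G) eq_refl).
  - exact (proj2 (Havoid _ _ (Gamma_star_swap G)) eq_refl).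
Qed.

End SpanningClass.

Lemma multiplex_of_pair_unique s1 s2 u v :
  simplex V E s2 -> covers s1 -> covers s2 ->
  In u s1 -> In v s1 -> u <> v -> (forall m, In m s1 -> m = u \/ m = v) ->
  forall x y, multiplex_of V E s1 x y <-> multiplex_of V E s2 x y.
Proof.
  intros Hs2 Hc1 Hc2 Hu Hv Huv Hall.
  pose proof (multiplex_of_pair Hu Hv Huv Hall) as M1.
  assert (Hspan : forall z, exists w, color u v z w).
  { intros z; destruct (Hc1 z) as [w Hzw]; exists w; apply M1; exact Hzw. }
  destruct (simplex_meets_spanning_class Hspan Hs2 Hc2) as (a & b & Ha & Hb & Hab & Cab).
  assert (Hall2 : forall m, In m s2 -> m = a \/ m = b).
  { intros m Hm; apply NNPP; intros Hmab.
    assert (Hma : m <> a) by tauto; assert (Hmb : m <> b) by tauto.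
    destruct (Hspan m) as [w Cmw].
    destruct (color_class_trans (color_class_sym Cab) Cmw) as [G | G].
    - exact (proj1 (simplex_class_avoids Hs2 Ha Hb Hm Hab Hma Hmb G) eq_refl).
    - exact (proj2 (simplex_class_avoids Hs2 Ha Hb Hm Hab Hma Hmb G) eq_refl). }
  intros x y; rewrite M1, (multiplex_of_pair Ha Hb Hab Hall2).
  exact (color_class_iff Cab x y).
Qed.

Lemma multiplex_of_unique s1 s2 :
  simplex V E s1 -> simplex V E s2 -> covers s1 -> covers s2 ->
  forall x y, multiplex_of V E s1 x y <-> multiplex_of V E s2 x y.
Proof.
  intros Hs1 Hs2 Hc1 Hc2.
  destruct (simplex_third_or_pair Hs1) as [H1 | (u & v & Hu & Hv & Huv & Hall)].
  2: exact (multiplex_of_pair_unique Hs2 Hc1 Hc2 Hu Hv Huv Hall).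
  destruct (simplex_third_or_pair Hs2) as [H2 | (u & v & Hu & Hv & Huv & Hall)].
  2: intros x y; symmetry; exact (multiplex_of_pair_unique Hs1 Hc2 Hc1 Hu Hv Huv Hall x y).
  intros x y.
  rewrite (multiplex_of_co_connected Hs1 H1 Hc1), (multiplex_of_co_connected Hs2 H2 Hc2).
  reflexivity.
Qed.

Lemma covers_of_spanned s (M : V -> V -> Prop) :
  (forall x y, M x y <-> multiplex_of V E s x y) -> (forall z, spanned V M z) -> covers s.
Proof.
  intros HM Hsp z; destruct (Hsp z) as [w [Hzw | Hwz]]; exists w.
  - apply HM, Hzw.
  - apply HM in Hwz; destruct Hwz as (u & v & Hu & Hv & Huv & C).
    exists u, v; repeat split; auto.
    destruct C; [right | left]; auto.
Qed.

End Graph.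

Unset Implicit Arguments.

Theorem corollary4p6 (V : Type) (E : V -> V -> Prop) :
  undirected V E ->
  forall M1 M2 : V -> V -> Prop,
    is_multiplex V E M1 -> is_multiplex V E M2 ->
    (forall z, spanned V M1 z) -> (forall z, spanned V M2 z) ->
    forall x y, M1 x y <-> M2 x y.
Proof.
  intros HU M1 M2 [s1 [Hs1 HM1]] [s2 [Hs2 HM2]] Hsp1 Hsp2 x y.
  rewrite HM1, HM2.
  apply (multiplex_of_unique HU Hs1 Hs2); eapply covers_of_spanned; eauto.
Qed.
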